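(* Let $\Gamma$ be a single-player extensive-form game without chance nodes, and let $\mathscr C$ be the class of games that share the same game tree and infoset partition as $\Gamma$ (with arbitrary nonnegative utilities). Then $$\mathrm{VoR}^{\mathrm{opt}}(\mathscr C)=\max_{z\in\mathcal Z}\frac{1}{\alpha(z)}.$$
   Context: A single-player extensive-form game without chance nodes consists of a finite rooted tree (nodes $\mathcal H$, leaves $\mathcal Z$, actions $A_h$), all nonterminal nodes belonging to Player 1, a utility $u_1:\mathcal Z\to\mathbb R_{\ge0}$, and a partition $\mathcal I_1$ of nonterminal nodes into infosets with common action sets $A_I$. For a node $h$ with root-to-$h$ path $(h_0,\dots,h_{d-1})$, $\mathrm{obs}_1(h)=(I_k,a_k)_k$ lists infosets of and actions at the $h_k$. $\mathrm{pr}_1(\Gamma)$ has the same tree and utilities, with each infoset partitioned into classes of $h\sim h'\iff\mathrm{obs}_1(h)=\mathrm{obs}_1(h')$. $u_1(\mathrm{opt}(\cdot))$ is the maximum expected utility over behavioral strategies; $\mathrm{VoR}^{\mathrm{opt}}(\Gamma)=u_1(\mathrm{opt}(\mathrm{pr}_1(\Gamma)))/u_1(\mathrm{opt}(\Gamma))$ and $\mathrm{VoR}^{\mathrm{opt}}(\mathscr C)=\sup_{\Gamma'\in\mathscr C}\mathrm{VoR}^{\mathrm{opt}}(\Gamma')$. For $z\in\mathcal Z$ with path infosets/actions $(I_k,a_k)$ and $I\in\mathcal I_1$, $a\in A_I$: $n_z(I)=|\{k:I_k=I\}|$, $n_z(a)=|\{k:I_k=I,a_k=a\}|$, $p_z(a)=n_z(a)/n_z(I)$,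 $\alpha(z)=\prod_{I:n_z(I)>1}\prod_{a\in A_I:n_z(a)>0}p_z(a)^{n_z(a)}$. *)

From HB Require Import structures.
From mathcomp Require Import all_boot all_order all_algebra.
From mathcomp Require Import classical_sets reals.
Set Implicit Arguments. Unset Strict Implicit. Unset Printing Implicit Defensive.
Import Order.TTheory GRing.Theory Num.Theory.
Local Open Scope ring_scope.

(* A finite rooted game tree in which every nonterminal node is a decision
   node of Player 1 labelled by its infoset [I : Info]; the actions available
   at the node are the common action set [Act I] of the infoset, and the
   children are indexed by these actions.  Leaves carry a value of type [L]
   (the utility for a game, [unit] for the bare tree).  The infoset partition
   of the nonterminal nodes is the partition by label. *)
Inductive tree (Info : Type) (Act : Info -> finType) (L : Type) : Type :=
| Leaf of L
| Node (I : Info) of (Act I -> tree Act L).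
Arguments Leaf {Info Act L}.
Arguments Node {Info Act L}.

Fixpoint tree_map (Info : Type) (Act : Info -> finType) (L L' : Type)
  (f : L -> L') (t : tree Act L) : tree Act L' :=
  match t with
  | Leaf x => Leaf (f x)
  | Node i ch => Node i (fun a => tree_map f (ch a))
  end.

(* The underlying game tree together with its infoset partition. *)
Definition shape (Info : Type) (Act : Info -> finType) (L : Type)
  (t : tree Act L) : tree Act unit := tree_map (fun _ => tt) t.

Definition game (R : realType) (Info : Type) (Act : Info -> finType) :=
  tree Act R.

Definition obsT (Info : Type) (Act : Info -> finType) := {I : Info & Act I}.

Definition behavioral (R : realType) (Info : Type) (Act : Info -> finType)
  (s : forall I : Info, Act I -> R) : Prop :=
  forall I : Info, (forall a, 0 <= s I a) /\ \sum_(a : Act I) s I a = 1.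

Fixpoint EU (R : realType) (Info : Type) (Act : Info -> finType)
  (s : forall I : Info, Act I -> R) (t : game R Act) : R :=
  match t with
  | Leaf r => r
  | Node i ch => \sum_(a : Act i) s i a * EU s (ch a)
  end.

Definition opt_value (R : realType) (Info : Type) (Act : Info -> finType)
  (t : game R Act) : R :=
  sup [set EU s t | s in behavioral (Act := Act)]%classic.

(* pr_1(Gamma): same tree and utilities; the node h with label I and
   root-to-h observation sequence obs_1(h) = p is relabelled by the pair
   (I, p), so the new infosets are exactly the classes of
   h ~ h' <-> I(h) = I(h') /\ obs_1(h) = obs_1(h'). *)
Definition prAct (Info : Type) (Act : Info -> finType)
  (x : Info * seq (obsT Act)) : finType := Act x.1.

Fixpoint pr_aux (Info : Type) (Act : Info -> finType) (L : Type)
  (p : seq (obsT Act)) (t : tree Act L) : tree (@prAct Info Act) L :=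
  match t with
  | Leaf x => Leaf x
  | Node i ch => @Node _ (@prAct Info Act) L (i, p)
                   (fun a => pr_aux (rcons p (Tagged Act a)) (ch a))
  end.

Definition pr1 (Info : Type) (Act : Info -> finType) (L : Type)
  (t : tree Act L) := pr_aux [::] t.

(* Leaves, identified by their root-to-leaf sequence of (infoset, action). *)
Fixpoint leaves (Info : Type) (Act : Info -> finType) (L : Type)
  (t : tree Act L) : seq (seq (obsT Act)) :=
  match t with
  | Leaf _ => [:: [::]]
  | Node i ch =>
      flatten [seq [seq (Tagged Act a) :: z | z <- leaves (ch a)] | a : Act i]
  end.

Fixpoint leaf_values (Info : Type) (Act : Info -> finType) (L : Type)
  (t : tree Act L) : seq L :=
  match t with
  | Leaf x => [:: x]
  | Node i ch => flatten [seq leaf_values (ch a) | a : Act i]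
  end.

Section Alpha.
Variables (R : realType) (Info : eqType) (Act : Info -> finType).

Definition n_info (z : seq (obsT Act)) (I : Info) : nat :=
  count (fun o => tag o == I) z.
Definition n_act (z : seq (obsT Act)) (I : Info) (a : Act I) : nat :=
  count (fun o => o == Tagged Act a) z.
Definition p_act (z : seq (obsT Act)) (I : Info) (a : Act I) : R :=
  (n_act z a)%:R / (n_info z I)%:R.
Definition alpha (z : seq (obsT Act)) : R :=
  \prod_(I <- undup (map tag z) | (1 < n_info z I)%N)
     \prod_(a : Act I | (0 < n_act z a)%N) p_act z a ^+ n_act z a.
End Alpha.

(* VoR^opt(C) = sup over Gamma' in C of u(opt(pr(Gamma')))/u(opt(Gamma')),
   where C = games with the same tree and infoset partition as [t] and
   arbitrary nonnegative utilities (games with u(opt) = 0, i.e. all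
   utilities 0, are excluded since the ratio is 0/0 there). *)
Definition VoR_opt_class (R : realType) (Info : Type) (Act : Info -> finType)
  (t : game R Act) : R :=
  sup [set opt_value (pr1 t') / opt_value t' |
        t' in [set t' : game R Act | shape t' = shape t /\
               (forall r, r \in leaf_values t' -> 0 <= r) /\
               0 < opt_value t']]%classic.

(* If leaf [z] carries utility [u], the behavioral strategy that plays at each
   infoset [I] the empirical frequencies [p_z] of the actions taken at [I] along
   [z] reaches [z] with probability [alpha z]; hence [opt t >= u * alpha z].  As
   [opt (pr1 t)] is at most the largest utility, the ratio is at most
   [max_z 1 / alpha z].  The maximum is attained by the game with utility 1 at
   a maximizing leaf [z] and 0 elsewhere: with perfect recall [z] is reached
   surely, while without it the probability of reaching [z] is a product over
   infosets of multinomial likelihoods [prod_a s(a) ^ n_z(a)], which by AM-GM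
   is at most the product of [p_z(a) ^ n_z(a)], i.e. [alpha z]. *)

From Pilot Require Import Defs.
From HB Require Import structures.
From mathcomp Require Import all_boot all_order all_algebra.
From mathcomp Require Import boolp classical_sets reals.
From mathcomp Require Import ring.
Import Order.TTheory GRing.Theory Num.Theory.
Local Open Scope ring_scope.

Lemma big_group_by {T K : eqType} {R : Type} {idx : R} (op : Monoid.com_law idx)
    (key : T -> K) (s : seq T) (F : T -> R) :
  \big[op/idx]_(x <- s) F x =
  \big[op/idx]_(k <- undup (map key s)) \big[op/idx]_(x <- s | key x == k) F x.
Proof.
under [RHS]eq_bigr do rewrite big_mkcond /=.
rewrite exchange_big /=; apply: eq_big_seq => x xs.
rewrite (bigD1_seq (key x)) ?undup_uniq ?mem_undup ?map_f //= eqxx.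
by rewrite big1 ?Monoid.mulm1 // => k /negbTE; rewrite eq_sym => ->.
Qed.

Lemma bigmax_seq_attained {d} {T : orderType d} {I : eqType} (x0 : T) (r : seq I)
    (F : I -> T) :
  \big[Order.max/x0]_(i <- r) F i = x0 \/
  exists2 i, i \in r & \big[Order.max/x0]_(i <- r) F i = F i.
Proof.
elim: r => [|j r IH]; first by left; rewrite big_nil.
rewrite big_cons maxEle; case: ifP => _; last by right; exists j; rewrite ?mem_head.
by case: IH => [->|[i i_r ->]]; [left | right; exists i; rewrite // inE i_r orbT].
Qed.

Lemma sup_greatest (R : realType) (E : set R) (x : R) :
  E x -> ubound E x -> sup E = x.
Proof.
move=> Ex ubx; apply/le_anti/andP; split; first by apply: ge_sup => //; exists x.
by apply: ub_le_sup => //; exists x.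
Qed.

Section EmpiricalLikelihood.
Context {R : realFieldType} {A : finType}.

Lemma prod_expn_le_AGM (x : A -> R) (n : A -> nat) :
  (forall a, 0 <= x a) ->
  \prod_a x a ^+ n a <=
  ((\sum_a (n a)%:R * x a) / (\sum_a n a)%:R) ^+ (\sum_a n a).
Proof.
(* AM-GM for the family of [n a] copies of each [x a], indexed by [T]. *)
move=> x_ge0; pose T := {a : A & 'I_(n a)}.
have [] := leif_AGM (A := predT) (E := fun p : T => x (tag p)) (fun p _ => x_ge0 _).
have card_T : #|(predT : {pred T})| = (\sum_a n a)%N.
  rewrite -sum1_card -(sig_big_dep predT (fun _ => predT) (fun _ _ => 1%N)).
  by apply: eq_bigr => a _; rewrite sum1_card card_ord.
rewrite card_T -!(sig_big_dep predT (fun _ => predT) (fun a _ => x a)) /=.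
under eq_bigr do rewrite prodr_const card_ord.
by under [X in _ <= (X / _) ^+ _ -> _]eq_bigr do
  rewrite sumr_const card_ord -mulr_natl.
Qed.

Lemma prod_expn_le_empirical (s : A -> R) (n : A -> nat) :
  (forall a, 0 <= s a) -> \sum_a s a = 1 ->
  \prod_a s a ^+ n a <= \prod_a ((n a)%:R / (\sum_b n b)%:R) ^+ n a.
Proof.
move=> s_ge0 s_sum1; set N := (\sum_b n b)%N.
have [/eqP|N_gt0] := posnP N.
  rewrite sum_nat_eq0 => /forallP n0.
  by rewrite !big1 // => a _; rewrite (eqP (n0 a)).
have N_neq0 : (N%:R : R) != 0 by rewrite pnatr_eq0 -lt0n.
(* [s a = n a / N * x a]; the [n]-weighted mean of [x] is at most [\sum_a s a]. *)
pose x a := s a * N%:R / (n a)%:R.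
have x_ge0 a : 0 <= x a by rewrite /x !mulr_ge0 ?invr_ge0.
have s_split a : s a ^+ n a = ((n a)%:R / N%:R) ^+ n a * x a ^+ n a.
  have [->|n_gt0] := posnP (n a); first by rewrite !expr0 mulr1.
  by rewrite -exprMn /x; congr (_ ^+ _); field; rewrite N_neq0 pnatr_eq0 -lt0n n_gt0.
rewrite (eq_bigr _ (fun a _ => s_split a)) big_split /= ler_piMr //.
  by apply: prodr_ge0 => a _; rewrite exprn_ge0 // divr_ge0.
apply: le_trans (prod_expn_le_AGM x n x_ge0) _; apply: exprn_ile1.
  by rewrite divr_ge0 // sumr_ge0 // => a _; rewrite mulr_ge0.
rewrite ler_pdivrMr ?ltr0n // mul1r.
have -> : (N%:R : R) = \sum_a s a * N%:R by rewrite -mulr_suml s_sum1 mul1r.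
apply: ler_sum => a _; rewrite /x.
have [->|n_gt0] := posnP (n a); first by rewrite mulr0n mul0r mulr_ge0.
by rewrite mulrC divfK // pnatr_eq0 -lt0n n_gt0.
Qed.

End EmpiricalLikelihood.

Definition uniform {R : realType} {Info : Type} {Act : Info -> finType} :
  forall I : Info, Act I -> R := fun I _ => #|Act I|%:R^-1.

Lemma sum_uniform (R : numFieldType) (A : finType) :
  (0 < #|A|)%N -> \sum_(a : A) (#|A|%:R^-1 : R) = 1.
Proof.
by move=> A_gt0; rewrite sumr_const -[_^-1 *+ _]mulr_natl mulfV // pnatr_eq0 -lt0n.
Qed.

Lemma uniform_behavioral {R : realType} {Info : Type} {Act : Info -> finType} :
  (forall I, (0 < #|Act I|)%N) -> behavioral (@uniform R Info Act).
Proof. by move=> Act_gt0 I; split=> [a|]; rewrite ?invr_ge0 ?sum_uniform. Qed.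

Definition path_prob {R : realType} {Info : Type} {Act : Info -> finType}
    (s : forall I : Info, Act I -> R) (z : seq (obsT Act)) : R :=
  \prod_(o <- z) s (tag o) (tagged o).

Section Counts.
Context {Info : eqType} {Act : Info -> finType}.
Implicit Types (z : seq (obsT Act)) (I : Info).

Lemma big_Tagged_eq {T : Type} {idx : T} (op : Monoid.com_law idx)
    (F : forall I, Act I -> T) (o : obsT Act) I :
  \big[op/idx]_(a : Act I | o == Tagged Act a) F I a =
  if tag o == I then F (tag o) (tagged o) else idx.
Proof.
case: o => j b /=; have [<-|neq_jI] := eqVneq j I.
  by rewrite (big_pred1 b) // => a; rewrite /= eq_Tagged eq_sym.
by rewrite big_pred0 // => a; apply/negbTE; apply: contra neq_jI => /eq_tag/eqP.
Qed.

Lemma sum_n_act z I : (\sum_(a : Act I) n_act z a)%N = n_info z I.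
Proof.
rewrite /n_info -sum1_count [RHS]big_mkcond.
under eq_bigr do rewrite /n_act -sum1_count big_mkcond.
rewrite exchange_big; apply: eq_bigr => o _.
by rewrite -big_mkcond big_Tagged_eq.
Qed.

Lemma prod_tag_eq (R : comPzSemiRingType) (s : forall I, Act I -> R) z I :
  \prod_(o <- z | tag o == I) s (tag o) (tagged o) =
  \prod_(a : Act I) s I a ^+ n_act z a.
Proof.
rewrite big_mkcond.
under [RHS]eq_bigr do rewrite /n_act -iter_mulr_1 -big_const_seq big_mkcond.
rewrite exchange_big; apply: eq_bigr => o _.
by rewrite -big_mkcond big_Tagged_eq.
Qed.

Lemma n_act_le_n_info z {I} (a : Act I) : (n_act z a <= n_info z I)%N.
Proof. by apply: sub_count => o /eqP ->. Qed.

Lemma n_info_gt0 z I : I \in undup (map tag z) -> (0 < n_info z I)%N.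
Proof.
rewrite mem_undup => /mapP [o oz ->].
by rewrite /n_info -has_count; apply/hasP; exists o.
Qed.

Context {R : realType}.

Lemma path_probE (s : forall I, Act I -> R) z :
  path_prob s z =
  \prod_(I <- undup (map tag z)) \prod_(a : Act I) s I a ^+ n_act z a.
Proof.
rewrite /path_prob (big_group_by _ tag).
by apply: eq_bigr => I _; rewrite prod_tag_eq.
Qed.

(* The factors of [alpha] with [n_z(I) <= 1] or [n_z(a) = 0] are [1] anyway. *)
Lemma alphaE z :
  alpha R z =
  \prod_(I <- undup (map tag z)) \prod_(a : Act I) p_act R z a ^+ n_act z a.
Proof.
rewrite /alpha big_mkcond /=; apply: eq_bigr => I _.
rewrite big_mkcond /=; case: ifP => [_|n_info_le1].
  by apply: eq_bigr => a _; case: posnP => [->|n_act_gt0]; rewrite ?n_act_gt0.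
apply/esym; rewrite big1 // => a _.
have := n_act_le_n_info z a; move: n_info_le1; rewrite /p_act.
case: (n_info z I) => [|[|//]] // _; case: (n_act z a) => [|[|//]] //= _.
by rewrite divr1 expr1.
Qed.

Lemma alpha_gt0 z : 0 < alpha R z.
Proof.
apply: prodr_gt0 => I _; apply: prodr_gt0 => a n_act_gt0.
rewrite exprn_gt0 // divr_gt0 // ltr0n //.
exact: leq_trans n_act_gt0 (n_act_le_n_info z a).
Qed.

Definition empirical z : forall I, Act I -> R :=
  fun I a => if (0 < n_info z I)%N then p_act R z a else uniform I a.

Lemma empirical_behavioral z :
  (forall I, (0 < #|Act I|)%N) -> behavioral (empirical z).
Proof.
move=> Act_gt0 I; rewrite /empirical.
have [n_info_gt0|_] := boolP (0 < n_info z I)%N; last exact: uniform_behavioral.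
split=> [a|]; first by rewrite divr_ge0.
rewrite /p_act -mulr_suml -natr_sum sum_n_act mulfV //.
by rewrite pnatr_eq0 -lt0n.
Qed.

Lemma path_prob_empirical z : path_prob (empirical z) z = alpha R z.
Proof.
rewrite path_probE alphaE big_seq [RHS]big_seq; apply: eq_bigr => I I_z.
by apply: eq_bigr => a _; rewrite /empirical n_info_gt0.
Qed.

Lemma path_prob_le_alpha {s : forall I, Act I -> R} z :
  behavioral s -> path_prob s z <= alpha R z.
Proof.
move=> s_beh; rewrite path_probE alphaE; apply: ler_prod => I _.
have [s_ge0 s_sum1] := s_beh I.
rewrite prodr_ge0 => [|a _]; last exact: exprn_ge0.
have := prod_expn_le_empirical (s I) (fun a => n_act z a) s_ge0 s_sum1.
by rewrite sum_n_act.
Qed.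

End Counts.

Section Trees.
Context {Info : Type} {Act : Info -> finType}.

Inductive leaf_path {L : Type} : tree Act L -> seq (obsT Act) -> L -> Prop :=
| LeafPath (x : L) : leaf_path (Leaf x) [::] x
| NodePath (I : Info) (ch : Act I -> tree Act L) (a : Act I) z x :
    leaf_path (ch a) z x -> leaf_path (Node I ch) (Tagged Act a :: z) x.

Lemma mem_leaf_values_Node {L : eqType} {I : Info} {ch : Act I -> tree Act L}
    {a : Act I} {r : L} :
  r \in leaf_values (ch a) -> r \in leaf_values (Node I ch).
Proof.
move=> r_a; apply/flattenP; exists (leaf_values (ch a)) => //.
by apply: map_f; rewrite mem_enum.
Qed.

Lemma leaves_shape {L : Type} (t : tree Act L) : leaves (Defs.shape t) = leaves t.
Proof.
by elim: t => [x|I ch IH] //=; congr flatten; apply: eq_map => a; rewrite IH.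
Qed.

Lemma leaf_values_pr_aux {L : Type} (p : seq (obsT Act)) (t : tree Act L) :
  leaf_values (pr_aux p t) = leaf_values t.
Proof. by elim: t p => [x|I ch IH] p //=; congr flatten; apply: eq_map => a. Qed.

Context {R : realType}.
Implicit Types (s : forall I, Act I -> R) (t : game R Act).

Lemma EU_ge0 s t :
  (forall I a, 0 <= s I a) -> (forall r, r \in leaf_values t -> 0 <= r) ->
  0 <= EU s t.
Proof.
move=> s_ge0; elim: t => [r|I ch IH] /= t_ge0; first by apply: t_ge0; rewrite inE.
apply: sumr_ge0 => a _; rewrite mulr_ge0 // IH // => r r_a.
exact/t_ge0/(mem_leaf_values_Node r_a).
Qed.

Lemma EU_le s t (B : R) :
  behavioral s -> (forall r, r \in leaf_values t -> r <= B) -> EU s t <= B.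
Proof.
move=> s_beh; elim: t => [r|I ch IH] /= t_le; first by apply: t_le; rewrite inE.
have [s_ge0 s_sum1] := s_beh I.
have -> : B = \sum_a s I a * B by rewrite -mulr_suml s_sum1 mul1r.
apply: ler_sum => a _; rewrite ler_wpM2l // IH // => r r_a.
exact/t_le/(mem_leaf_values_Node r_a).
Qed.

Lemma EU_ge_leaf_path {s t z u} :
  (forall I a, 0 <= s I a) -> (forall r, r \in leaf_values t -> 0 <= r) ->
  leaf_path t z u -> u * path_prob s z <= EU s t.
Proof.
move=> s_ge0 + path_z; elim: path_z => [x|I ch a z' x _ IH] /= t_ge0.
  by rewrite /path_prob big_nil mulr1.
have ch_ge0 b r : r \in leaf_values (ch b) -> 0 <= r.
  by move=> r_b; apply/t_ge0/(mem_leaf_values_Node r_b).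
rewrite /path_prob big_cons /= -/(path_prob s z') (bigD1 a) //= mulrCA.
rewrite -[leLHS]addr0; apply: lerD.
  by apply: ler_wpM2l => //; exact: IH (ch_ge0 a).
by apply: sumr_ge0 => b _; rewrite mulr_ge0 ?EU_ge0 //; apply: ch_ge0.
Qed.

Lemma EU_le_opt_value {s t} : behavioral s -> EU s t <= opt_value t.
Proof.
move=> s_beh; apply: ub_le_sup; last by exists s.
exists (\big[Num.max/0]_(r <- leaf_values t) r) => _ [s' s'_beh <-].
by apply: EU_le => // r r_t; apply: le_bigmax_seq.
Qed.

Lemma opt_value_le t (B : R) : (forall I, (0 < #|Act I|)%N) ->
  (forall s, behavioral s -> EU s t <= B) -> opt_value t <= B.
Proof.
move=> Act_gt0 EU_le_B; apply: ge_sup => [|_ [s s_beh <-]]; last exact: EU_le_B.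
by exists (EU uniform t), uniform => //; apply: uniform_behavioral.
Qed.

End Trees.

Section LeafPaths.
Context {Info : eqType} {Act : Info -> finType}.

Lemma mem_leaves_Node {L : Type} {I : Info} {ch : Act I -> tree Act L}
    {a : Act I} {z : seq (obsT Act)} :
  z \in leaves (ch a) -> Tagged Act a :: z \in leaves (Node I ch).
Proof.
move=> z_a; apply/flattenP; exists [seq Tagged Act a :: z' | z' <- leaves (ch a)].
  by apply: map_f; rewrite mem_enum.
exact: map_f.
Qed.

Lemma leaf_values_path {L : eqType} {t : tree Act L} {r : L} :
  r \in leaf_values t -> exists2 z, z \in leaves t & leaf_path t z r.
Proof.
elim: t => [x|I ch IH] /=.
  by rewrite inE => /eqP ->; exists [::]; [rewrite inE | constructor].
case/flattenP => _ /mapP [a _ ->] /IH [z z_a path_z].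
by exists (Tagged Act a :: z); [exact: mem_leaves_Node | constructor].
Qed.

Lemma leaves_nonempty {L : Type} (t : tree Act L) :
  (forall I, (0 < #|Act I|)%N) -> exists z, z \in leaves t.
Proof.
move=> Act_gt0; elim: t => [x|I ch IH] /=; first by exists [::]; rewrite inE.
have [a _] := card_gt0P (Act_gt0 I); have [z z_a] := IH a.
by exists (Tagged Act a :: z); exact: mem_leaves_Node.
Qed.

End LeafPaths.

Section ValueOfRecall.
Context {Info : eqType} {Act : Info -> finType} {R : realType}.
Hypothesis Act_gt0 : forall I, (0 < #|Act I|)%N.
Implicit Types (t : game R Act) (z w : seq (obsT Act)).

Let prAct_gt0 (x : Info * seq (obsT Act)) : (0 < #|prAct x|)%N := Act_gt0 x.1.

(* A pure strategy of [pr1 t]: its infosets record the history [x.2], so it can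
   play the action that extends [x.2] along [w]. *)
Definition follow w : forall x : Info * seq (obsT Act), prAct x -> R :=
  fun x a =>
    if [pick b : Act x.1 | take (size x.2).+1 w == rcons x.2 (Tagged Act b)]
      is Some b
    then (b == a)%:R else uniform x a.

Lemma follow_behavioral w : behavioral (follow w).
Proof.
move=> x; rewrite /follow; case: pickP => [b _|_]; last exact: uniform_behavioral.
split=> [a|]; first by rewrite ler0n.
by rewrite (bigD1 b) //= eqxx big1 ?addr0 // => a /negbTE; rewrite eq_sym => ->.
Qed.

Lemma follow_on_path p I (a : Act I) z :
  follow (p ++ Tagged Act a :: z) (I, p) a = 1.
Proof.
have prefix : take (size p).+1 (p ++ Tagged Act a :: z) = rcons p (Tagged Act a).
  by rewrite take_cat ltnNge leqnSn subSnn /= take0 cats1.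
rewrite /follow /= prefix.
case: pickP => [b /eqP/rcons_inj [] ab|/(_ a)]; last by rewrite eqxx.
by rewrite (eq_from_Tagged ab) eqxx.
Qed.

Lemma EU_follow_ge {t z u} :
  (forall r, r \in leaf_values t -> 0 <= r) -> leaf_path t z u ->
  forall p, u <= EU (follow (p ++ z)) (pr_aux p t).
Proof.
move=> + path_z; elim: path_z => [x|I ch a z' x _ IH] /= t_ge0 p //.
have ch_ge0 b r : r \in leaf_values (ch b) -> 0 <= r.
  by move=> r_b; apply/t_ge0/(mem_leaf_values_Node r_b).
rewrite (bigD1 a) //= follow_on_path mul1r -[leLHS]addr0; apply: lerD.
  by have := IH (ch_ge0 a) (rcons p (Tagged Act a)); rewrite cat_rcons.
have follow_ge0 w y c : 0 <= follow w y c by have [] := follow_behavioral w y.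
apply: sumr_ge0 => b _; rewrite mulr_ge0 ?EU_ge0 // => r.
by rewrite leaf_values_pr_aux; apply: ch_ge0.
Qed.

(* [Some r]: the node lies on the target path and [r] is what remains of it;
   [None]: the node is off the path. *)
Definition path_tail (r : option (seq (obsT Act))) (o : obsT Act) :=
  if r is Some (o' :: r') then (if o' == o then Some r' else None) else None.

Fixpoint indicator_from {L : Type} (r : option (seq (obsT Act))) (t : tree Act L) :
    game R Act :=
  match t with
  | Leaf _ => Leaf (if r is Some [::] then 1 else 0)
  | Node i ch => Node i (fun a => indicator_from (path_tail r (Tagged Act a)) (ch a))
  end.

Definition indicator {L : Type} z (t : tree Act L) := indicator_from (Some z) t.

Lemma shape_indicator_from {L : Type} r (t : tree Act L) :
  Defs.shape (indicator_from r t) = Defs.shape t.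
Proof.
rewrite /Defs.shape; elim: t r => [x|I ch IH] r //=.
by congr (Node I _); apply: funext => a; rewrite IH.
Qed.

Lemma indicator_from_bounds {L : Type} r (t : tree Act L) v :
  v \in leaf_values (indicator_from r t) -> 0 <= v <= 1.
Proof.
elim: t r => [x|I ch IH] r /=; last by case/flattenP => _ /mapP [a _ ->]; apply: IH.
by rewrite inE => /eqP ->; case: r => [[|? ?]|]; rewrite ?lexx ?ler01.
Qed.

Lemma leaf_path_indicator {L : Type} {t : tree Act L} {z} :
  z \in leaves t -> leaf_path (indicator z t) z 1.
Proof.
elim: t z => [x|I ch IH] z /=; first by rewrite inE => /eqP ->; constructor.
case/flattenP => _ /mapP [a _ ->] /mapP [z' z'_a ->].
by constructor; rewrite /= eqxx; apply: IH.
Qed.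

Lemma EU_indicator_from_le {L : Type} (s : forall I, Act I -> R) r (t : tree Act L) :
  (forall I a, 0 <= s I a) ->
  EU s (indicator_from r t) <= (if r is Some z then path_prob s z else 0).
Proof.
move=> s_ge0; have path_prob_ge0 z : 0 <= path_prob s z by apply: prodr_ge0.
elim: t r => [x|I ch IH] r /=.
  by case: r => [[|o z]|] //=; rewrite /path_prob big_nil.
apply: (@le_trans _ _ (\sum_a s I a *
    (if path_tail r (Tagged Act a) is Some z then path_prob s z else 0))).
  by apply: ler_sum => a _; rewrite ler_wpM2l ?IH.
case: r => [[|o z]|] /=; try by rewrite big1 // => a _; rewrite mulr0.
rewrite (eq_bigr (fun a => if o == Tagged Act a then s I a * path_prob s z else 0)).
  rewrite -big_mkcond (big_Tagged_eq _ (fun J b => s J b * path_prob s z)).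
  rewrite /path_prob big_cons -/(path_prob s z).
  by case: ifP => _; rewrite ?mulr_ge0 ?s_ge0.
by move=> a _; case: ifP; rewrite ?mulr0.
Qed.

Lemma opt_value_ge_alpha {t z u} :
  (forall r, r \in leaf_values t -> 0 <= r) -> leaf_path t z u ->
  u * alpha R z <= opt_value t.
Proof.
move=> t_ge0 path_z; have s_beh := empirical_behavioral (R := R) z Act_gt0.
rewrite -path_prob_empirical; apply: le_trans _ (EU_le_opt_value s_beh).
by apply: EU_ge_leaf_path => // I a; have [] := s_beh I.
Qed.

Lemma opt_value_pr1_le t (M : R) :
  (forall r, r \in leaf_values t -> 0 <= r) ->
  (forall z, z \in leaves t -> (alpha R z)^-1 <= M) ->
  opt_value (pr1 t) <= M * opt_value t.
Proof.
move=> t_ge0 alpha_le_M; apply: (opt_value_le _ _ prAct_gt0) => s s_beh.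
apply: EU_le => // u; rewrite leaf_values_pr_aux => u_t.
have [z z_t path_z] := leaf_values_path u_t.
have alpha_z_gt0 := alpha_gt0 (R := R) z.
have -> : u = u * alpha R z * (alpha R z)^-1 by rewrite mulfK // gt_eqF.
rewrite [leRHS]mulrC; apply: ler_pM; last exact: alpha_le_M.
- exact: mulr_ge0 (t_ge0 _ u_t) (ltW alpha_z_gt0).
- by rewrite invr_ge0 ltW.
- exact: opt_value_ge_alpha t_ge0 path_z.
Qed.

Lemma opt_value_indicator {L : Type} (t : tree Act L) z :
  z \in leaves t -> opt_value (indicator z t) = alpha R z.
Proof.
move=> z_t; apply/le_anti/andP; split.
  apply: (opt_value_le _ _ Act_gt0) => s s_beh.
  apply: le_trans _ (path_prob_le_alpha z s_beh).
  by apply: EU_indicator_from_le => I a; have [] := s_beh I.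
rewrite -[leLHS]mul1r; apply: opt_value_ge_alpha (leaf_path_indicator z_t).
by move=> r /indicator_from_bounds/andP[].
Qed.

Lemma opt_value_pr1_indicator {L : Type} (t : tree Act L) z :
  z \in leaves t -> opt_value (pr1 (indicator z t)) = 1.
Proof.
move=> z_t; apply/le_anti/andP; split.
  apply: (opt_value_le _ _ prAct_gt0) => s s_beh; apply: EU_le => // r.
  by rewrite leaf_values_pr_aux => /indicator_from_bounds/andP[].
apply: le_trans _ (EU_le_opt_value (follow_behavioral z)).
apply: (EU_follow_ge _ (leaf_path_indicator z_t) [::]).
by move=> r /indicator_from_bounds/andP[].
Qed.

End ValueOfRecall.

Theorem corollary3 (R : realType) (Info : eqType) (Act : Info -> finType)
  (Hact : forall I : Info, (0 < #|Act I|)%N)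
  (t : game R Act) (Hnonneg : forall r, r \in leaf_values t -> 0 <= r) :
  VoR_opt_class t =
  \big[Num.max/0]_(z <- leaves t) (alpha R z)^-1.
Proof.
set M := \big[Num.max/0]_(z <- leaves t) _.
have alpha_le_M z : z \in leaves t -> (alpha R z)^-1 <= M.
  by move=> z_t; exact: (le_bigmax_seq _ z xpredT (fun z => (alpha R z)^-1) z_t).
have [z z_t M_z] : exists2 z, z \in leaves t & M = (alpha R z)^-1.
  have [z0 z0_t] := leaves_nonempty t Hact.
  case: (bigmax_seq_attained 0 (leaves t) (fun z => (alpha R z)^-1)) => // M0.
  by have := alpha_le_M z0 z0_t; rewrite /M M0 leNgt invr_gt0 alpha_gt0.
apply: sup_greatest.
  exists (indicator z t); last first.
    by rewrite opt_value_pr1_indicator // opt_value_indicator // div1r M_z.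
  split; first exact: shape_indicator_from.
  split; first by move=> r /indicator_from_bounds/andP[].
  by rewrite opt_value_indicator // alpha_gt0.
move=> _ [t' [t'_shape [t'_ge0 opt_gt0]] <-].
have leaves_t' : leaves t' = leaves t.
  by rewrite -leaves_shape t'_shape leaves_shape.
rewrite ler_pdivrMr // opt_value_pr1_le // => z'.
by rewrite leaves_t'; exact: alpha_le_M.
Qed.
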